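(* Let $g(x,y)=\dfrac{\theta(2x)\theta(2y)}{h(x,y)}$. Then for all $x,y$ (where defined), \[ g(x,y)+g(x+\eta,y)+g(x+2\eta,y)=0 , \] and similarly $g(x,y)+g(x,y+\eta)+g(x,y+2\eta)=0$.
   Context: For $|q|<1$, $\theta_1(x;q)=2\sum_{n\ge0}(-1)^nq^{(n+1/2)^2}\sin((2n+1)x)$. Fix $p=e^{i\pi\tau}$ with $\operatorname{Im}\tau>0$, write $\theta(x)=\theta_1(x;p)$, set $\eta=\pi/3$, and $h(x,y)=\theta(\eta+x-y)\theta(\eta+x+y)\theta(\eta-x-y)\theta(\eta-x+y)$. *)

From Stdlib Require Import Reals ClassicalEpsilon.
Open Scope R_scope.

Definition CC : Type := (R * R)%type.
Definition Cre (z : CC) : R := fst z.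
Definition Cim (z : CC) : R := snd z.
Definition RtoC (r : R) : CC := (r, 0).
Definition C0 : CC := (0, 0).
Definition Cadd (z w : CC) : CC := (fst z + fst w, snd z + snd w).
Definition Cmul (z w : CC) : CC :=
  (fst z * fst w - snd z * snd w, fst z * snd w + snd z * fst w).
Definition Cscale (r : R) (z : CC) : CC := (r * fst z, r * snd z).
Definition Cinv (z : CC) : CC :=
  (fst z / (fst z ^ 2 + snd z ^ 2), - snd z / (fst z ^ 2 + snd z ^ 2)).
Definition Cdiv (z w : CC) : CC := Cmul z (Cinv w).

Definition Cexp (z : CC) : CC := (exp (fst z) * cos (snd z), exp (fst z) * sin (snd z)).
Definition Csin (z : CC) : CC :=
  (sin (fst z) * ((exp (snd z) + exp (- snd z)) / 2),
   cos (fst z) * ((exp (snd z) - exp (- snd z)) / 2)).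

Definition Ccv (u : nat -> CC) (l : CC) : Prop :=
  Un_cv (fun N => fst (u N)) (fst l) /\ Un_cv (fun N => snd (u N)) (snd l).

(* p = e^{i pi tau}; p^{s} := exp(i pi tau s) *)
Definition ppow (tau : CC) (s : R) : CC := Cexp (Cscale s (Cmul (0, PI) tau)).

Definition theta_term (tau x : CC) (n : nat) : CC :=
  Cscale (2 * (-1) ^ n)
    (Cmul (ppow tau ((INR n + / 2) ^ 2)) (Csin (Cscale (2 * INR n + 1) x))).

Fixpoint theta_psum (tau x : CC) (N : nat) : CC :=
  match N with
  | O => theta_term tau x 0
  | S M => Cadd (theta_psum tau x M) (theta_term tau x (S M))
  end.

Definition theta (tau x : CC) : CC :=
  epsilon (inhabits C0) (fun l => Ccv (theta_psum tau x) l).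

Definition eta : CC := RtoC (PI / 3).

Definition h (tau x y : CC) : CC :=
  Cmul (Cmul (theta tau (Cadd eta (Cadd x (Cscale (-1) y))))
             (theta tau (Cadd eta (Cadd x y))))
       (Cmul (theta tau (Cadd eta (Cadd (Cscale (-1) x) (Cscale (-1) y))))
             (theta tau (Cadd eta (Cadd (Cscale (-1) x) y)))).

Definition g (tau x y : CC) : CC :=
  Cdiv (Cmul (theta tau (Cscale 2 x)) (theta tau (Cscale 2 y))) (h tau x y).

(* The two relations are consequences of one "three-term identity" for the odd theta
   function: for all complex x, y, writing u_t = x + t,
     Σ_{t ∈ {0, η, 2η}} θ(2 u_t) θ(u_t + y) θ(u_t − y) = 0.              (★)
   To prove (★) we write θ(z) = −i Σ_{a ∈ ℤ} (−1)^a p^{(a+1/2)²} e^{i(2a+1)z} and work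
   with the truncations of the series to the window a ∈ [−N−1, N].  Expanding the
   product of three truncations gives a sum over a box of triples (a, b, c); summing over
   t multiplies the term of (a, b, c) by Σ_t e^{2imt}, m = 2a+b+c+2, which vanishes unless
   3 | m.  On the triples with 3 | m the involution (a,b,c) ↦ (a−d, b+d, c+d),
   d = 2a+1−2m/3, preserves m, b − c and the exponent of p but flips the sign, so terms
   cancel in pairs except when the partner leaves the box.  Those terms carry a factor
   p^{≥ (N+1)²}, so the truncated left side of (★) is O(N³ e^{−π Im τ N² + O(N)}) and
   tends to 0, while it also tends to the left side of (★). *)

From Pilot Require Import Defs.
From Stdlib Require Import Reals Lra Lia List ZArith Permutation ClassicalEpsilon.
From Coquelicot Require Import Coquelicot.
Open Scope R_scope.

(* [CC] and Coquelicot's [C] are both [R * R] with definitionally equal operations, so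
   identities between complex numbers are proved with Coquelicot's field structure. *)
Ltac C_ring :=
  change Cmul with Cmult in *; change Cadd with Cplus in *;
  match goal with |- ?l = ?r => change (@eq C l r) end; ring.

Lemma pair_eq (a b c d : R) : a = c -> b = d -> (a, b) = (c, d).
Proof. now intros -> ->. Qed.

Lemma Cscale_RtoC (r : R) (z : C) : Cscale r z = Cmult (RtoC r) z.
Proof. unfold Cscale, Cmult, RtoC; cbn [fst snd]. apply pair_eq; ring. Qed.

Lemma exp_le_exp (x y : R) : x <= y -> exp x <= exp y.
Proof. intros [H | ->]; [left; now apply exp_increasing | lra]. Qed.

Definition expi (w : C) : C := (exp (- snd w) * cos (fst w), exp (- snd w) * sin (fst w)).

Lemma expi_add (a b : C) : expi (Cplus a b) = Cmult (expi a) (expi b).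
Proof.
  unfold expi, Cplus, Cmult; cbn [fst snd].
  rewrite Ropp_plus_distr, exp_plus, cos_plus, sin_plus. apply pair_eq; ring.
Qed.

Lemma expi_real (t : R) : expi (RtoC t) = (cos t, sin t).
Proof. unfold expi, RtoC; cbn [fst snd]. rewrite Ropp_0, exp_0. apply pair_eq; ring. Qed.

Lemma Cmod_expi (w : C) : Cmod (expi w) = exp (- snd w).
Proof.
  unfold Cmod, expi; cbn [fst snd].
  replace ((exp (- snd w) * cos (fst w)) ^ 2 + (exp (- snd w) * sin (fst w)) ^ 2)
    with (exp (- snd w) ^ 2) by (pose proof (sin2_cos2 (fst w)); unfold Rsqr in *; nra).
  apply sqrt_pow2. left; apply exp_pos.
Qed.

Lemma Csin_expi (w : C) : Csin w = Cmult (0, -1/2) (Cplus (expi w) (Copp (expi (Copp w)))).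
Proof.
  unfold Csin, Cmult, Cplus, Copp, expi; cbn [fst snd].
  rewrite Ropp_involutive, cos_neg, sin_neg. apply pair_eq; field.
Qed.

Lemma Cmod_Csin (w : C) : Cmod (Csin w) <= exp (Rabs (snd w)).
Proof.
  rewrite Csin_expi, Cmod_mult.
  assert (Hc : Cmod (0, -1/2) = 1/2).
  { unfold Cmod; cbn [fst snd]. replace (0 ^ 2 + (-1/2) ^ 2) with ((1/2) ^ 2) by field.
    apply sqrt_pow2. lra. }
  rewrite Hc. eapply Rle_trans; [apply Rmult_le_compat_l; [lra | apply Cmod_triangle] |].
  rewrite Cmod_opp, !Cmod_expi. unfold Copp; cbn [snd]. rewrite Ropp_involutive.
  assert (exp (- snd w) <= exp (Rabs (snd w)))
    by (apply exp_le_exp; rewrite <- Rabs_Ropp; apply Rle_abs).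
  assert (exp (snd w) <= exp (Rabs (snd w))) by (apply exp_le_exp, Rle_abs).
  lra.
Qed.

Lemma ppow_add (tau : CC) (s t : R) : ppow tau (s + t) = Cmult (ppow tau s) (ppow tau t).
Proof.
  unfold ppow, Cexp, Cscale, Cmult; cbn [fst snd].
  rewrite !Rmult_plus_distr_r, exp_plus, cos_plus, sin_plus. apply pair_eq; ring.
Qed.

Lemma Cmod_ppow (tau : CC) (s : R) : Cmod (ppow tau s) = exp (- (PI * snd tau) * s).
Proof.
  unfold Cmod, ppow, Cexp, Cscale, Cmul; cbn [fst snd].
  set (u := s * (0 * fst tau - PI * snd tau)). set (v := s * (0 * snd tau + PI * fst tau)).
  replace ((exp u * cos v) ^ 2 + (exp u * sin v) ^ 2)
    with (exp u ^ 2) by (pose proof (sin2_cos2 v); unfold Rsqr in *; nra).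
  rewrite sqrt_pow2 by (left; apply exp_pos). f_equal. unfold u. ring.
Qed.

Definition zsign (a : Z) : R := if Z.even a then 1 else -1.

Lemma zsign_nat (n : nat) : zsign (Z.of_nat n) = (-1) ^ n.
Proof.
  induction n as [| n IH]; [reflexivity |].
  unfold zsign in *. rewrite Nat2Z.inj_succ, Z.even_succ, <- Z.negb_even.
  destruct (Z.even (Z.of_nat n)); cbn; rewrite <- IH; ring.
Qed.

Lemma zsign_add (a b : Z) : zsign (a + b) = zsign a * zsign b.
Proof. unfold zsign. rewrite Z.even_add. destruct (Z.even a), (Z.even b); cbn; ring. Qed.

Lemma zsign_add_odd (a d : Z) : Z.odd d = true -> zsign (a + d) = - zsign a.
Proof. intros Hd. rewrite zsign_add. unfold zsign at 2. rewrite <- Z.negb_odd, Hd. cbn; ring. Qed.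

Lemma Rabs_zsign (a : Z) : Rabs (zsign a) = 1.
Proof. unfold zsign. destruct (Z.even a); [apply Rabs_R1 | rewrite Rabs_left; lra]. Qed.

(* The a-th term of the bilateral series: θ(z) = -i Σ_{a ∈ ℤ} bterm τ z a. *)
Definition bterm (tau z : C) (a : Z) : C :=
  Cmult (RtoC (zsign a))
    (Cmult (ppow tau ((IZR a + / 2) ^ 2)) (expi (Cmult (RtoC (IZR (2 * a + 1))) z))).

Lemma theta_term_bterm (tau z : CC) (n : nat) :
  theta_term tau z n
  = Cmult (0, -1) (Cplus (bterm tau z (Z.of_nat n)) (bterm tau z (- Z.of_nat n - 1))).
Proof.
  assert (Hsign : zsign (- Z.of_nat n - 1) = - zsign (Z.of_nat n)).
  { unfold zsign. replace (- Z.of_nat n - 1)%Z with (Z.pred (- Z.of_nat n)) by lia.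
    rewrite Z.even_pred, Z.odd_opp, <- Z.negb_even.
    destruct (Z.even (Z.of_nat n)); cbn; ring. }
  assert (Hpow : (IZR (- Z.of_nat n - 1) + / 2) ^ 2 = (IZR (Z.of_nat n) + / 2) ^ 2)
    by (rewrite minus_IZR, opp_IZR; field).
  assert (Hfreq : Cmult (RtoC (IZR (2 * (- Z.of_nat n - 1) + 1))) z
                  = Copp (Cmult (RtoC (IZR (2 * Z.of_nat n + 1))) z)).
  { unfold Copp, Cmult, RtoC; cbn [fst snd].
    rewrite plus_IZR, mult_IZR, minus_IZR, opp_IZR, plus_IZR, mult_IZR. apply pair_eq; ring. }
  unfold theta_term, bterm. rewrite Hsign, Hpow, Hfreq, zsign_nat, !Cscale_RtoC, Csin_expi.
  replace (IZR (2 * Z.of_nat n + 1)) with (2 * INR n + 1)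
    by (rewrite plus_IZR, mult_IZR, <- INR_IZR_INZ; reflexivity).
  replace (IZR (Z.of_nat n)) with (INR n) by apply INR_IZR_INZ.
  unfold RtoC, Cmul, Cmult, Cplus, Copp; cbn [fst snd]. apply pair_eq; field.
Qed.

Definition lsum {A : Type} (f : A -> C) (l : list A) : C :=
  fold_right (fun x acc => Cplus (f x) acc) (RtoC 0) l.

Lemma lsum_app {A} (f : A -> C) l1 l2 : lsum f (l1 ++ l2) = Cplus (lsum f l1) (lsum f l2).
Proof. induction l1; simpl; [| rewrite IHl1]; C_ring. Qed.

Lemma lsum_ext {A} (f g : A -> C) l : (forall x, In x l -> f x = g x) -> lsum f l = lsum g l.
Proof. induction l; simpl; intros H; [reflexivity | rewrite H, IHl; auto]. Qed.

Lemma lsum_map {A B} (f : B -> C) (s : A -> B) l : lsum f (map s l) = lsum (fun x => f (s x)) l.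
Proof. induction l; simpl; [reflexivity | now rewrite IHl]. Qed.

Lemma lsum_mult_l {A} (c : C) (f : A -> C) l :
  Cmult c (lsum f l) = lsum (fun x => Cmult c (f x)) l.
Proof. induction l; simpl; [| rewrite <- IHl]; C_ring. Qed.

Lemma lsum_plus {A} (f g : A -> C) l :
  lsum (fun x => Cplus (f x) (g x)) l = Cplus (lsum f l) (lsum g l).
Proof. induction l; simpl; [| rewrite IHl]; C_ring. Qed.

Lemma lsum_opp {A} (f : A -> C) l : lsum (fun x => Copp (f x)) l = Copp (lsum f l).
Proof. induction l; simpl; [| rewrite IHl]; C_ring. Qed.

Lemma lsum_prod {A B} (f : A -> C) (g : B -> C) l1 l2 :
  Cmult (lsum f l1) (lsum g l2)
  = lsum (fun p => Cmult (f (fst p)) (g (snd p))) (list_prod l1 l2).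
Proof.
  induction l1 as [| a l1 IH]; simpl; [C_ring |].
  rewrite lsum_app, lsum_map, <- IH. simpl. rewrite <- lsum_mult_l. C_ring.
Qed.

Lemma lsum_perm {A} (f : A -> C) l l' : Permutation l l' -> lsum f l = lsum f l'.
Proof. induction 1; simpl; [reflexivity | now rewrite IHPermutation | C_ring | congruence]. Qed.

Lemma lsum_filter {A} (f : A -> C) (p : A -> bool) l :
  lsum f l = Cplus (lsum f (filter p l)) (lsum f (filter (fun x => negb (p x)) l)).
Proof. induction l; simpl; [| destruct (p a); simpl; rewrite IHl]; C_ring. Qed.

Lemma lsum_bound {A} (f : A -> C) l M :
  (forall x, In x l -> Cmod (f x) <= M) -> Cmod (lsum f l) <= INR (length l) * M.
Proof.
  induction l as [| a l IH]; intros H.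
  - simpl. rewrite Cmod_0. lra.
  - change (length (a :: l)) with (S (length l)). rewrite S_INR. simpl.
    eapply Rle_trans; [apply Cmod_triangle |].
    specialize (IH (fun x Hx => H x (or_intror Hx))). specialize (H a (or_introl eq_refl)). lra.
Qed.

Lemma lsum_involution_cancel {A} (l : list A) (inv : A -> A) (f : A -> C) (mem : A -> bool) :
  NoDup l -> (forall x, In x l <-> mem x = true) -> (forall x, inv (inv x) = x) ->
  (forall x, f (inv x) = Copp (f x)) ->
  lsum f (filter (fun x => mem (inv x)) l) = RtoC 0.
Proof.
  intros Hnd Hmem Hinv Hf.
  set (L := filter (fun x => mem (inv x)) l).
  assert (HL : forall x, In x L <-> mem x = true /\ mem (inv x) = true)
    by (intros x; unfold L; rewrite filter_In, Hmem; tauto).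
  assert (Hnd' : NoDup (map inv L)).
  { apply FinFun.Injective_map_NoDup; [| now apply NoDup_filter].
    intros x y E. now rewrite <- (Hinv x), <- (Hinv y), E. }
  assert (Hincl : incl (map inv L) L).
  { intros x Hx. apply in_map_iff in Hx as [y [<- Hy]]. apply HL in Hy. apply HL.
    rewrite Hinv. tauto. }
  pose proof (lsum_perm f _ _ (Permutation_map_same_l inv Hnd' Hincl)) as P.
  rewrite lsum_map, (lsum_ext _ (fun x => Copp (f x))), lsum_opp in P by auto.
  destruct (lsum f L) as [u v]. unfold Copp in P; injection P as P1 P2. apply pair_eq; lra.
Qed.

(* The window of integers [-N-1, N], listed in the order in which the partial sums of
   the theta series pick up its elements. *)
Fixpoint window (N : nat) : list Z :=
  match N with
  | O => 0%Z :: (-1)%Z :: nil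
  | S M => window M ++ (Z.of_nat (S M) :: (- Z.of_nat (S M) - 1)%Z :: nil)
  end.

Lemma window_length N : length (window N) = (2 * N + 2)%nat.
Proof. induction N; cbn [window]; [reflexivity | rewrite length_app, IHN; cbn; lia]. Qed.

Lemma In_window N a : In a (window N) <-> (- Z.of_nat N - 1 <= a <= Z.of_nat N)%Z.
Proof.
  induction N as [| N IH]; cbn [window].
  - cbn. split; [intros [<- | [<- | []]]; lia |].
    intros H. assert (a = 0 \/ a = -1)%Z as [-> | ->] by lia; auto.
  - rewrite in_app_iff, IH. cbn. split; [intros [H | [<- | [<- | []]]]; lia |].
    intros H. assert (- Z.of_nat N - 1 <= a <= Z.of_nat N \/ Z.pos (Pos.of_succ_nat N) = a
      \/ (- Z.pos (Pos.of_succ_nat N) - 1) = a)%Z by lia. tauto.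
Qed.

Lemma window_NoDup N : NoDup (window N).
Proof.
  induction N; cbn [window].
  - constructor; [cbn; lia | constructor; [auto | constructor]].
  - apply NoDup_app; [assumption | constructor; [cbn; lia | constructor; [auto | constructor]] |].
    intros a Ha%In_window. cbn. lia.
Qed.

Lemma theta_psum_window tau z N :
  theta_psum tau z N = Cmult (0, -1) (lsum (bterm tau z) (window N)).
Proof.
  induction N as [| N IH]; cbn [theta_psum window]; rewrite theta_term_bterm.
  - simpl. C_ring.
  - rewrite IH, lsum_app. simpl. C_ring.
Qed.

Lemma NoDup_list_prod {A B} (l1 : list A) (l2 : list B) :
  NoDup l1 -> NoDup l2 -> NoDup (list_prod l1 l2).
Proof.
  induction l1 as [| a l1 IH]; cbn; intros H1 H2; [constructor |].
  inversion H1; subst. apply NoDup_app; auto.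
  - apply FinFun.Injective_map_NoDup; auto. now intros x y [= ->].
  - intros [u v] Hin Hin2. apply in_map_iff in Hin as [w [[= <- _] _]].
    apply in_prod_iff in Hin2. tauto.
Qed.

Notation triple := ((Z * Z) * Z)%type.

Definition box (N : nat) : list triple := list_prod (list_prod (window N) (window N)) (window N).

Definition windowb (N : nat) (e : Z) : bool := (- Z.of_nat N - 1 <=? e)%Z && (e <=? Z.of_nat N)%Z.

Definition boxb (N : nat) (q : triple) : bool :=
  windowb N (fst (fst q)) && windowb N (snd (fst q)) && windowb N (snd q).

Lemma windowb_spec N e : windowb N e = true <-> (- Z.of_nat N - 1 <= e <= Z.of_nat N)%Z.
Proof. unfold windowb. rewrite Bool.andb_true_iff, !Z.leb_le. tauto. Qed.

Lemma boxb_spec N q : In q (box N) <-> boxb N q = true.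
Proof.
  destruct q as [[a b] c]. unfold box, boxb; cbn [fst snd].
  rewrite !in_prod_iff, !In_window, !Bool.andb_true_iff, !windowb_spec. tauto.
Qed.

Lemma box_NoDup N : NoDup (box N).
Proof. unfold box. repeat apply NoDup_list_prod; apply window_NoDup. Qed.

Lemma box_length N : length (box N) = ((2 * N + 2) * (2 * N + 2) * (2 * N + 2))%nat.
Proof. unfold box. rewrite !length_prod, window_length. reflexivity. Qed.

Lemma lsum_box (f g k : Z -> C) N :
  Cmult (Cmult (lsum f (window N)) (lsum g (window N))) (lsum k (window N))
  = lsum (fun q => Cmult (Cmult (f (fst (fst q))) (g (snd (fst q)))) (k (snd q))) (box N).
Proof. unfold box. rewrite !lsum_prod. apply lsum_ext. now intros [[a b] c] _. Qed.

(* Data attached to a triple q = (a, b, c) of bilateral indices: the frequency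
   m = 2a + b + c + 2 of the variable shift t, the exponent of p, and the phase. *)
Definition charge (q : triple) : Z := (2 * fst (fst q) + snd (fst q) + snd q + 2)%Z.

Definition pexponent (q : triple) : R :=
  (IZR (fst (fst q)) + / 2) ^ 2 + (IZR (snd (fst q)) + / 2) ^ 2 + (IZR (snd q) + / 2) ^ 2.

Definition phase (x y : C) (q : triple) : C :=
  Cplus (Cmult (RtoC (2 * IZR (charge q))) x)
        (Cmult (RtoC (2 * IZR (snd (fst q) - snd q))) y).

(* Closed form of a product of three bilateral terms at 2u, u + y, u - y with u = x + t:
   the shift t only enters through the factor e^{2imt}. *)
Lemma bterm_triple tau x y t (q : triple) :
  let u := Cplus x (RtoC t) in
  Cmult (Cmult (bterm tau (Cmult (RtoC 2) u) (fst (fst q))) (bterm tau (Cplus u y) (snd (fst q))))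
        (bterm tau (Cplus u (Copp y)) (snd q))
  = Cmult (RtoC (zsign (fst (fst q) + snd (fst q) + snd q)))
      (Cmult (ppow tau (pexponent q))
        (Cmult (expi (phase x y q)) (expi (RtoC (2 * IZR (charge q) * t))))).
Proof.
  destruct q as [[a b] c]. intros u. unfold bterm, pexponent, phase, charge; cbn [fst snd].
  rewrite !zsign_add, !ppow_add, <- expi_add.
  assert (Hexp : Cmult (Cmult (expi (Cmult (RtoC (IZR (2 * a + 1))) (Cmult (RtoC 2) u)))
                              (expi (Cmult (RtoC (IZR (2 * b + 1))) (Cplus u y))))
                       (expi (Cmult (RtoC (IZR (2 * c + 1))) (Cplus u (Copp y))))
               = expi (Cplus (Cplus (Cmult (RtoC (2 * IZR (2 * a + b + c + 2))) x)
                                    (Cmult (RtoC (2 * IZR (b - c))) y))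
                             (RtoC (2 * IZR (2 * a + b + c + 2) * t)))).
  { rewrite <- !expi_add. f_equal. unfold u.
    rewrite !plus_IZR, !mult_IZR, !minus_IZR.
    unfold Cplus, Cmult, Copp, RtoC; cbn [fst snd]. apply pair_eq; ring. }
  rewrite <- Hexp, !RtoC_mult. C_ring.
Qed.

Lemma expi_period (t : R) (k : Z) : expi (RtoC (t + 2 * IZR k * PI)) = expi (RtoC t).
Proof.
  rewrite !expi_real. destruct (Z_le_gt_dec 0 k).
  - replace k with (Z.of_nat (Z.to_nat k)) by lia. rewrite <- INR_IZR_INZ.
    now rewrite cos_period, sin_period.
  - replace k with (- Z.of_nat (Z.to_nat (- k)))%Z by lia. rewrite opp_IZR, <- INR_IZR_INZ.
    set (n := Z.to_nat (- k)).
    rewrite <- (cos_period (t + 2 * - INR n * PI) n), <- (sin_period (t + 2 * - INR n * PI) n).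
    now replace (t + 2 * - INR n * PI + 2 * INR n * PI) with t by ring.
Qed.

Definition cube_sum (m : Z) : C :=
  Cplus (Cplus (expi (RtoC 0)) (expi (RtoC (2 * IZR m * (PI / 3)))))
        (expi (RtoC (2 * IZR m * (2 * (PI / 3))))).

Lemma cube_sum_value m : cube_sum m = if (m mod 3 =? 0)%Z then RtoC 3 else RtoC 0.
Proof.
  assert (H4 : expi (RtoC (4 * (PI / 3))) = (-1/2, - (sqrt 3 / 2))).
  { rewrite expi_real. replace (4 * (PI / 3)) with (PI / 3 + PI) by field.
    rewrite neg_cos, neg_sin, cos_PI3, sin_PI3. apply pair_eq; field. }
  assert (H2 : expi (RtoC (2 * (PI / 3))) = (-1/2, sqrt 3 / 2))
    by (now rewrite expi_real, cos_2PI3, sin_2PI3).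
  pose proof (Z.div_mod m 3 ltac:(lia)) as Hm.
  pose proof (Z.mod_pos_bound m 3 ltac:(lia)) as Hr.
  set (j := (m / 3)%Z) in *. set (r := (m mod 3)%Z) in *.
  assert (Hm' : IZR m = 3 * IZR j + IZR r) by (rewrite Hm, plus_IZR, mult_IZR; reflexivity).
  unfold cube_sum. rewrite Hm'.
  replace (2 * (3 * IZR j + IZR r) * (PI / 3)) with (2 * IZR r * (PI / 3) + 2 * IZR j * PI)
    by field.
  replace (2 * (3 * IZR j + IZR r) * (2 * (PI / 3)))
    with (4 * IZR r * (PI / 3) + 2 * IZR (2 * j) * PI) by (rewrite mult_IZR; field).
  rewrite !expi_period, expi_real, cos_0, sin_0.
  assert (r = 0 \/ r = 1 \/ r = 2)%Z as [-> | [-> | ->]] by lia; cbn [Z.eqb].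
  - rewrite !Rmult_0_r, !Rmult_0_l, expi_real, cos_0, sin_0.
    unfold Cplus, RtoC; cbn [fst snd]. apply pair_eq; ring.
  - replace (2 * 1 * (PI / 3)) with (2 * (PI / 3)) by ring.
    replace (4 * 1 * (PI / 3)) with (4 * (PI / 3)) by ring.
    rewrite H2, H4. unfold Cplus, RtoC; cbn [fst snd]. apply pair_eq; field.
  - replace (2 * 2 * (PI / 3)) with (4 * (PI / 3)) by ring.
    replace (4 * 2 * (PI / 3)) with (2 * (PI / 3) + 2 * IZR 1 * PI) by field.
    rewrite expi_period, H2, H4. unfold Cplus, RtoC; cbn [fst snd]. apply pair_eq; field.
Qed.

Definition pivot (q : triple) : Z := (2 * fst (fst q) + 1 - 2 * (charge q / 3))%Z.

Definition partner (q : triple) : triple :=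
  ((fst (fst q) - pivot q, snd (fst q) + pivot q), snd q + pivot q)%Z.

Lemma charge_partner q : charge (partner q) = charge q.
Proof. destruct q as [[a b] c]. unfold partner, charge; cbn [fst snd]. lia. Qed.

Lemma partner_involutive q : partner (partner q) = q.
Proof.
  assert (Hd : pivot (partner q) = (- pivot q)%Z).
  { unfold pivot at 1. rewrite charge_partner.
    destruct q as [[a b] c]. unfold partner, pivot; cbn [fst snd]. lia. }
  destruct q as [[a b] c]. unfold partner at 1. rewrite Hd. unfold partner; cbn [fst snd].
  f_equal; [f_equal |]; lia.
Qed.

Lemma zsign_partner q :
  zsign (fst (fst (partner q)) + snd (fst (partner q)) + snd (partner q))
  = - zsign (fst (fst q) + snd (fst q) + snd q).
Proof.
  destruct q as [[a b] c]. unfold partner; cbn [fst snd].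
  replace (a - pivot (a, b, c) + (b + pivot (a, b, c)) + (c + pivot (a, b, c)))%Z
    with (a + b + c + pivot (a, b, c))%Z by lia.
  apply zsign_add_odd. unfold pivot; cbn [fst].
  replace (2 * a + 1 - 2 * (charge (a, b, c) / 3))%Z with (1 + 2 * (a - charge (a, b, c) / 3))%Z
    by lia.
  apply Z.odd_add_mul_2.
Qed.

Lemma pexponent_partner q : (charge q mod 3 = 0)%Z -> pexponent (partner q) = pexponent q.
Proof.
  intros Hm. pose proof (Z.div_mod (charge q) 3 ltac:(lia)) as Hd. rewrite Hm, Z.add_0_r in Hd.
  destruct q as [[a b] c]. unfold pexponent, partner, pivot; cbn [fst snd].
  set (j := (charge (a, b, c) / 3)%Z) in *. unfold charge in Hd; cbn [fst snd] in Hd.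
  assert (Hc : IZR c = 3 * IZR j - 2 * IZR a - IZR b - 2).
  { replace c with (3 * j - 2 * a - b - 2)%Z by lia. rewrite !minus_IZR, !mult_IZR. reflexivity. }
  repeat rewrite ?minus_IZR, ?plus_IZR, ?mult_IZR. rewrite Hc. field.
Qed.

Definition filtered_term (tau x y : C) (q : triple) : C :=
  Cmult (RtoC (zsign (fst (fst q) + snd (fst q) + snd q)))
    (Cmult (ppow tau (pexponent q)) (Cmult (expi (phase x y q)) (cube_sum (charge q)))).

Lemma filtered_term_partner tau x y q :
  filtered_term tau x y (partner q) = Copp (filtered_term tau x y q).
Proof.
  unfold filtered_term, phase. rewrite charge_partner, zsign_partner, RtoC_opp.
  replace (snd (fst (partner q)) - snd (partner q))%Z with (snd (fst q) - snd q)%Z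
    by (destruct q as [[a b] c]; unfold partner; cbn [fst snd]; lia).
  rewrite cube_sum_value. destruct (charge q mod 3 =? 0)%Z eqn:Hm.
  - rewrite pexponent_partner by now apply Z.eqb_eq. C_ring.
  - C_ring.
Qed.

Definition trunc_product (tau x y : C) (N : nat) (t : R) : C :=
  let u := Cplus x (RtoC t) in
  Cmult (Cmult (theta_psum tau (Cmult (RtoC 2) u) N) (theta_psum tau (Cplus u y) N))
        (theta_psum tau (Cplus u (Copp y)) N).

Definition trunc_sum (tau x y : C) (N : nat) : C :=
  Cplus (Cplus (trunc_product tau x y N 0) (trunc_product tau x y N (PI / 3)))
        (trunc_product tau x y N (2 * (PI / 3))).

Lemma trunc_product_box tau x y N t :
  trunc_product tau x y N t
  = Cmult Ci (lsum (fun q => Cmult (RtoC (zsign (fst (fst q) + snd (fst q) + snd q)))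
      (Cmult (ppow tau (pexponent q))
        (Cmult (expi (phase x y q)) (expi (RtoC (2 * IZR (charge q) * t)))))) (box N)).
Proof.
  unfold trunc_product. rewrite !theta_psum_window.
  replace Ci with (Cmult (Cmult (0, -1) (0, -1)) (0, -1))
    by (unfold Ci, Cmult; cbn [fst snd]; apply pair_eq; ring).
  transitivity (Cmult (Cmult (Cmult (0, -1) (0, -1)) (0, -1))
    (Cmult (Cmult (lsum (bterm tau (Cmult (RtoC 2) (Cplus x (RtoC t)))) (window N))
                  (lsum (bterm tau (Cplus (Cplus x (RtoC t)) y)) (window N)))
           (lsum (bterm tau (Cplus (Cplus x (RtoC t)) (Copp y))) (window N)))); [C_ring |].
  f_equal. rewrite lsum_box. apply lsum_ext. intros q _. apply bterm_triple.
Qed.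

Lemma trunc_sum_box tau x y N :
  trunc_sum tau x y N = Cmult Ci (lsum (filtered_term tau x y) (box N)).
Proof.
  unfold trunc_sum. rewrite !trunc_product_box, <- !Cmult_plus_distr_l, <- !lsum_plus.
  f_equal. apply lsum_ext. intros q _. unfold filtered_term, cube_sum.
  replace (2 * IZR (charge q) * 0) with 0 by ring. C_ring.
Qed.

Lemma window_inside N e : windowb N e = true -> - (INR N + 1) <= IZR e <= INR N.
Proof.
  intros [H1 H2]%windowb_spec. apply IZR_le in H1, H2.
  rewrite minus_IZR, opp_IZR, <- INR_IZR_INZ in H1. rewrite <- INR_IZR_INZ in H2. lra.
Qed.

Lemma window_outside N e : windowb N e = false -> (INR N + 1) ^ 2 <= (IZR e + / 2) ^ 2.
Proof.
  intros H. assert (Hout : ~ (- Z.of_nat N - 1 <= e <= Z.of_nat N)%Z)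
    by (intros H'%windowb_spec; congruence).
  pose proof (pos_INR N).
  assert (e >= Z.of_nat N + 1 \/ e <= - Z.of_nat N - 2)%Z as [He | He] by lia.
  - apply Z.ge_le, IZR_le in He. rewrite plus_IZR, <- INR_IZR_INZ in He. nra.
  - apply IZR_le in He. rewrite minus_IZR, opp_IZR, <- INR_IZR_INZ in He. nra.
Qed.

Lemma pexponent_outside N q : boxb N q = false -> (INR N + 1) ^ 2 <= pexponent q.
Proof.
  destruct q as [[a b] c]. unfold boxb, pexponent; cbn [fst snd]. intros Hout.
  pose proof (pow2_ge_0 (IZR a + / 2)). pose proof (pow2_ge_0 (IZR b + / 2)).
  pose proof (pow2_ge_0 (IZR c + / 2)).
  destruct (windowb N a) eqn:Ea; [destruct (windowb N b) eqn:Eb;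
    [destruct (windowb N c) eqn:Ec |] |]; try discriminate;
  [pose proof (window_outside N c Ec) | pose proof (window_outside N b Eb)
  | pose proof (window_outside N a Ea)]; lra.
Qed.

Lemma phase_inside x y N q : boxb N q = true ->
  - snd (phase x y q) <= 8 * (Rabs (snd x) + Rabs (snd y)) * (INR N + 1).
Proof.
  destruct q as [[a b] c]. unfold boxb; cbn [fst snd].
  intros [[Ha%window_inside Hb%window_inside]%andb_prop Hc%window_inside]%andb_prop.
  unfold phase, charge, Cplus, Cmult, RtoC; cbn [fst snd].
  rewrite !minus_IZR, !plus_IZR, !mult_IZR.
  set (m := 2 * IZR a + IZR b + IZR c + 2).
  assert (Hm : Rabs m <= 4 * (INR N + 1)) by (apply Rabs_le; unfold m; lra).
  assert (Hbc : Rabs (IZR b - IZR c) <= 4 * (INR N + 1)) by (apply Rabs_le; lra).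
  assert (H1 : - (m * snd x) <= Rabs m * Rabs (snd x))
    by (rewrite <- Rabs_mult, <- Rabs_Ropp; apply Rle_abs).
  assert (H2 : - ((IZR b - IZR c) * snd y) <= Rabs (IZR b - IZR c) * Rabs (snd y))
    by (rewrite <- Rabs_mult, <- Rabs_Ropp; apply Rle_abs).
  assert (Rabs m * Rabs (snd x) <= 4 * (INR N + 1) * Rabs (snd x))
    by (apply Rmult_le_compat_r; [apply Rabs_pos | lra]).
  assert (Rabs (IZR b - IZR c) * Rabs (snd y) <= 4 * (INR N + 1) * Rabs (snd y))
    by (apply Rmult_le_compat_r; [apply Rabs_pos | lra]).
  nra.
Qed.

Lemma filtered_term_bound tau x y N q : 0 < snd tau ->
  boxb N q = true -> boxb N (partner q) = false ->
  Cmod (filtered_term tau x y q)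
  <= 3 * exp (- (PI * snd tau) * (INR N + 1) ^ 2
              + 8 * (Rabs (snd x) + Rabs (snd y)) * (INR N + 1)).
Proof.
  intros Htau Hin Hout.
  unfold filtered_term.
  rewrite !Cmod_mult, Cmod_R, Rabs_zsign, Cmod_ppow, Cmod_expi, cube_sum_value.
  pose proof (exp_pos (- (PI * snd tau) * pexponent q)) as Hp.
  pose proof (exp_pos (- snd (phase x y q))) as He.
  destruct (charge q mod 3 =? 0)%Z eqn:Hm.
  2:{ rewrite Cmod_R, Rabs_R0, !Rmult_0_r. left. apply Rmult_lt_0_compat; [lra | apply exp_pos]. }
  apply Z.eqb_eq in Hm. rewrite Cmod_R, Rabs_pos_eq, exp_plus by lra.
  assert (Hq : exp (- (PI * snd tau) * pexponent q) <= exp (- (PI * snd tau) * (INR N + 1) ^ 2)).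
  { apply exp_le_exp. rewrite <- (pexponent_partner q Hm).
    assert (0 < PI * snd tau) by (apply Rmult_lt_0_compat; [apply PI_RGT_0 | exact Htau]).
    rewrite !Ropp_mult_distr_l_reverse. apply Ropp_le_contravar, Rmult_le_compat_l; [lra |].
    now apply pexponent_outside. }
  assert (Hph : exp (- snd (phase x y q))
                <= exp (8 * (Rabs (snd x) + Rabs (snd y)) * (INR N + 1)))
    by (apply exp_le_exp, phase_inside, Hin).
  pose proof (exp_pos (- (PI * snd tau) * (INR N + 1) ^ 2)). nra.
Qed.

(* Only the terms whose partner leaves the box survive in the truncated sum. *)
Lemma trunc_sum_bound tau x y N : 0 < snd tau ->
  Cmod (trunc_sum tau x y N)
  <= INR ((2 * N + 2) * (2 * N + 2) * (2 * N + 2))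
     * (3 * exp (- (PI * snd tau) * (INR N + 1) ^ 2
                 + 8 * (Rabs (snd x) + Rabs (snd y)) * (INR N + 1))).
Proof.
  intros Htau.
  rewrite trunc_sum_box, Cmod_mult, Cmod_Ci, Rmult_1_l,
    (lsum_filter _ (fun q => boxb N (partner q))),
    (lsum_involution_cancel _ _ _ _ (box_NoDup N) (boxb_spec N) partner_involutive
       (filtered_term_partner tau x y)).
  replace (Cplus (RtoC 0) _) with
    (lsum (filtered_term tau x y) (filter (fun q => negb (boxb N (partner q))) (box N)))
    by C_ring.
  eapply Rle_trans; [apply lsum_bound |].
  - intros q [Hq Hout]%filter_In. apply (filtered_term_bound tau x y N q Htau).
    + now apply boxb_spec.
    + now destruct (boxb N (partner q)).
  - apply Rmult_le_compat_r; [left; apply Rmult_lt_0_compat; [lra | apply exp_pos] |].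
    apply le_INR. rewrite <- box_length. apply filter_length_le.
Qed.

Lemma quadratic_bound (al B s : R) : 0 < al -> - al * s ^ 2 + B * s <= B ^ 2 / (4 * al).
Proof.
  intros H. assert (0 <= (2 * al * s - B) ^ 2 / (4 * al))
    by (apply Rdiv_le_0_compat; [apply pow2_ge_0 | lra]).
  replace (B ^ 2 / (4 * al)) with ((- al * s ^ 2 + B * s) + (2 * al * s - B) ^ 2 / (4 * al))
    by (field; lra).
  lra.
Qed.

(* Gaussian decay beats the cubic growth of the box: the bound is O(1/(N+1)). *)
Lemma cubic_gaussian_bound (al be : R) (N : nat) : 0 < al ->
  INR ((2 * N + 2) * (2 * N + 2) * (2 * N + 2))
  * (3 * exp (- al * (INR N + 1) ^ 2 + be * (INR N + 1)))
  <= 24 * exp ((be + 4) ^ 2 / (4 * al)) / (INR N + 1).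
Proof.
  intros Hal. set (t := INR N + 1).
  assert (Ht : 1 <= t) by (unfold t; pose proof (pos_INR N); lra).
  replace (INR ((2 * N + 2) * (2 * N + 2) * (2 * N + 2))) with ((2 * t) ^ 3)
    by (rewrite !mult_INR, !plus_INR, !mult_INR; unfold t; cbn [INR]; ring).
  set (K := exp ((be + 4) ^ 2 / (4 * al))).
  assert (HK : 0 < K) by apply exp_pos.
  assert (Hgauss : exp (- al * t ^ 2 + be * t) * exp t ^ 4 <= K).
  { replace (exp t ^ 4) with (exp (4 * t))
      by (cbn [pow]; rewrite Rmult_1_r, <- !exp_plus; f_equal; ring).
    rewrite <- exp_plus. apply exp_le_exp. pose proof (quadratic_bound al (be + 4) t Hal). lra. }
  assert (Hpoly : t ^ 4 <= exp t ^ 4)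
    by (apply pow_incr; split; [lra | pose proof (exp_ineq1 t); lra]).
  pose proof (exp_pos (- al * t ^ 2 + be * t)).
  apply (Rmult_le_reg_r t); [lra |].
  replace (24 * K / t * t) with (24 * K) by (field; lra).
  replace ((2 * t) ^ 3 * (3 * exp (- al * t ^ 2 + be * t)) * t)
    with (24 * (exp (- al * t ^ 2 + be * t) * t ^ 4)) by ring.
  apply Rmult_le_compat_l; [lra |].
  eapply Rle_trans; [| apply Hgauss]. apply Rmult_le_compat_l; lra.
Qed.

Lemma trunc_sum_vanishes tau x y : 0 < snd tau -> Un_cv (fun N => Cmod (trunc_sum tau x y N)) 0.
Proof.
  intros Ht. set (al := PI * snd tau). set (be := 8 * (Rabs (snd x) + Rabs (snd y))).
  assert (Hal : 0 < al) by (unfold al; pose proof PI_RGT_0; apply Rmult_lt_0_compat; lra).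
  set (K := 24 * exp ((be + 4) ^ 2 / (4 * al))).
  assert (HK : 0 < K) by (unfold K; pose proof (exp_pos ((be + 4) ^ 2 / (4 * al))); lra).
  intros e He. destruct (INR_unbounded (K / e)) as [N0 HN0]. exists N0.
  intros n Hn%le_INR. unfold R_dist. rewrite Rminus_0_r, Rabs_pos_eq by apply Cmod_ge_0.
  eapply Rle_lt_trans; [apply trunc_sum_bound; auto |]. fold al be.
  eapply Rle_lt_trans; [apply cubic_gaussian_bound; auto |]. fold K.
  assert (0 < INR n + 1) by (pose proof (pos_INR n); lra).
  apply Rlt_div_l; [lra |]. apply Rlt_div_l in HN0; [| lra]. nra.
Qed.

Lemma theta_term_bound tau z n : 0 < snd tau ->
  Cmod (theta_term tau z n)
  <= 2 * exp (- (PI * snd tau) * (INR n + / 2) ^ 2 + (2 * INR n + 1) * Rabs (snd z)).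
Proof.
  intros Ht. unfold theta_term. rewrite !Cscale_RtoC. change Cmul with Cmult.
  rewrite !Cmod_mult, Cmod_R, Cmod_ppow, Rabs_mult, pow_1_abs, (Rabs_pos_eq 2), exp_plus by lra.
  pose proof (Cmod_Csin (Cmult (RtoC (2 * INR n + 1)) z)) as H.
  replace (snd (Cmult (RtoC (2 * INR n + 1)) z)) with ((2 * INR n + 1) * snd z) in H
    by (unfold Cmult, RtoC; cbn [fst snd]; ring).
  rewrite Rabs_mult, (Rabs_pos_eq (2 * INR n + 1)) in H by (pose proof (pos_INR n); lra).
  pose proof (exp_pos (- (PI * snd tau) * (INR n + / 2) ^ 2)). nra.
Qed.

Lemma exp_opp_INR n : exp (- INR n) = exp (-1) ^ n.
Proof.
  induction n as [| n IH]; [cbn; rewrite Ropp_0; apply exp_0 |].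
  rewrite S_INR, <- tech_pow_Rmult, <- IH, <- exp_plus. f_equal. ring.
Qed.

Lemma theta_term_geometric tau z : 0 < snd tau ->
  exists K, forall n, Cmod (theta_term tau z n) <= K * exp (-1) ^ n.
Proof.
  intros Ht. set (al := PI * snd tau). set (B := 2 * Rabs (snd z) + 1).
  assert (Hal : 0 < al) by (unfold al; pose proof PI_RGT_0; apply Rmult_lt_0_compat; lra).
  exists (2 * exp (B ^ 2 / (4 * al) + Rabs (snd z) + 1)). intros n.
  eapply Rle_trans; [apply theta_term_bound; auto |]. fold al.
  rewrite <- exp_opp_INR, Rmult_assoc, <- exp_plus.
  apply Rmult_le_compat_l; [lra |]. apply exp_le_exp.
  pose proof (quadratic_bound al B (INR n + / 2) Hal). unfold B in *.
  pose proof (Rabs_pos (snd z)). nra.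
Qed.

Lemma Un_cv_dominated_geometric (a : nat -> R) K :
  (forall n, Rabs (a n) <= K * exp (-1) ^ n) -> exists l, Un_cv (sum_n a) l.
Proof.
  intros H.
  assert (Hex : ex_series a).
  { apply (ex_series_le a (fun n => scal K (exp (-1) ^ n))); [intros n; apply H |].
    apply (@ex_series_scal_l R_AbsRing R_NormedModule K (fun n => exp (-1) ^ n)).
    apply ex_series_geom. rewrite Rabs_pos_eq by (left; apply exp_pos).
    rewrite <- exp_0. apply exp_increasing. lra. }
  destruct Hex as [l Hl]. exists l. now apply is_lim_seq_Reals.
Qed.

Lemma theta_cv tau z : 0 < snd tau -> Ccv (theta_psum tau z) (theta tau z).
Proof.
  intros Ht. unfold theta. apply epsilon_spec.
  destruct (theta_term_geometric tau z Ht) as [K HK].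
  assert (Hfst : forall N, sum_n (fun n => fst (theta_term tau z n)) N = fst (theta_psum tau z N))
    by (induction N; [apply sum_O | rewrite sum_Sn, IHN; reflexivity]).
  assert (Hsnd : forall N, sum_n (fun n => snd (theta_term tau z n)) N = snd (theta_psum tau z N))
    by (induction N; [apply sum_O | rewrite sum_Sn, IHN; reflexivity]).
  destruct (Un_cv_dominated_geometric (fun n => fst (theta_term tau z n)) K) as [l1 H1].
  { intros n. eapply Rle_trans; [| apply HK]. eapply Rle_trans; [| apply Rmax_Cmod]. apply Rmax_l. }
  destruct (Un_cv_dominated_geometric (fun n => snd (theta_term tau z n)) K) as [l2 H2].
  { intros n. eapply Rle_trans; [| apply HK]. eapply Rle_trans; [| apply Rmax_Cmod]. apply Rmax_r. }
  exists (l1, l2). split; cbn [fst snd].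
  - intros e He. destruct (H1 e He) as [N HN]. exists N. intros n Hn. rewrite <- Hfst. auto.
  - intros e He. destruct (H2 e He) as [N HN]. exists N. intros n Hn. rewrite <- Hsnd. auto.
Qed.

Lemma Ccv_mult u v l m : Ccv u l -> Ccv v m -> Ccv (fun N => Cmult (u N) (v N)) (Cmult l m).
Proof.
  intros [H1 H2] [H3 H4]. unfold Ccv, Cmult; cbn [fst snd].
  split; [apply CV_minus | apply CV_plus]; apply CV_mult; auto.
Qed.

Lemma Ccv_plus u v l m : Ccv u l -> Ccv v m -> Ccv (fun N => Cplus (u N) (v N)) (Cplus l m).
Proof. intros [H1 H2] [H3 H4]. split; apply CV_plus; auto. Qed.

Lemma Ccv_opp u l : Ccv u l -> Ccv (fun N => Copp (u N)) (Copp l).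
Proof. intros [H1 H2]. split; apply CV_opp; auto. Qed.

Lemma Ccv_unique u l m : Ccv u l -> Ccv u m -> l = m.
Proof.
  intros [H1 H2] [H3 H4]. destruct l, m. cbn [fst snd] in *.
  f_equal; eapply UL_sequence; eauto.
Qed.

Lemma Ccv_Cmod_0 u : Un_cv (fun N => Cmod (u N)) 0 -> Ccv u (RtoC 0).
Proof.
  intros H. split; cbn [fst snd]; intros e He; destruct (H e He) as [N HN]; exists N;
    intros n Hn; specialize (HN n Hn); unfold R_dist in *; rewrite Rminus_0_r in *;
    rewrite Rabs_pos_eq in HN by apply Cmod_ge_0;
    eapply Rle_lt_trans; try exact HN; eapply Rle_trans; try apply Rmax_Cmod;
    [apply Rmax_l | apply Rmax_r].
Qed.

Definition theta_product (tau x y : C) (t : R) : C :=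
  let u := Cplus x (RtoC t) in
  Cmult (Cmult (theta tau (Cmult (RtoC 2) u)) (theta tau (Cplus u y)))
        (theta tau (Cplus u (Copp y))).

Lemma three_term_identity tau x y : 0 < snd tau ->
  Cplus (Cplus (theta_product tau x y 0) (theta_product tau x y (PI / 3)))
        (theta_product tau x y (2 * (PI / 3))) = RtoC 0.
Proof.
  intros Ht. apply (Ccv_unique (trunc_sum tau x y)).
  - unfold trunc_sum, trunc_product, theta_product.
    repeat apply Ccv_plus; repeat apply Ccv_mult; apply theta_cv; auto.
  - apply Ccv_Cmod_0, trunc_sum_vanishes, Ht.
Qed.

Ltac C_affine :=
  unfold eta, Defs.RtoC, RtoC, Cadd, Cscale, Cplus, Copp, Cmult; cbn [fst snd];
  apply pair_eq; lra.

Lemma theta_opp_termwise tau z w : 0 < snd tau ->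
  (forall n, theta_term tau w n = Copp (theta_term tau z n)) -> theta tau w = Copp (theta tau z).
Proof.
  intros Ht Hterm. apply (Ccv_unique (theta_psum tau w)); [now apply theta_cv |].
  assert (Hpsum : forall N, theta_psum tau w N = Copp (theta_psum tau z N)).
  { induction N as [| N IH]; cbn [theta_psum]; rewrite Hterm; [reflexivity |].
    rewrite IH. C_ring. }
  destruct (Ccv_opp _ _ (theta_cv tau z Ht)) as [H1 H2].
  split; intros e He; [destruct (H1 e He) as [N HN] | destruct (H2 e He) as [N HN]];
    exists N; intros n Hn; rewrite Hpsum; auto.
Qed.

Lemma theta_odd tau z : 0 < snd tau -> theta tau (Copp z) = Copp (theta tau z).
Proof.
  intros Ht. apply theta_opp_termwise; [exact Ht |]. intros n.
  unfold theta_term, Csin, Cscale, Cmul, Copp; cbn [fst snd].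
  replace ((2 * INR n + 1) * - fst z) with (- ((2 * INR n + 1) * fst z)) by ring.
  replace ((2 * INR n + 1) * - snd z) with (- ((2 * INR n + 1) * snd z)) by ring.
  rewrite sin_neg, cos_neg, Ropp_involutive. apply pair_eq; field.
Qed.

Lemma theta_antiperiodic tau z : 0 < snd tau -> theta tau (Cplus z (RtoC PI)) = Copp (theta tau z).
Proof.
  intros Ht. apply theta_opp_termwise; [exact Ht |]. intros n.
  unfold theta_term, Csin, Cscale, Cmul, Cplus, Copp, RtoC; cbn [fst snd].
  replace ((2 * INR n + 1) * (fst z + PI)) with ((2 * INR n + 1) * fst z + 2 * INR n * PI + PI)
    by ring.
  replace ((2 * INR n + 1) * (snd z + 0)) with ((2 * INR n + 1) * snd z) by ring.
  rewrite neg_sin, neg_cos, sin_period, cos_period. apply pair_eq; ring.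
Qed.

Lemma theta_reflect tau z : 0 < snd tau -> theta tau (Cplus (Copp z) (RtoC PI)) = theta tau z.
Proof.
  intros Ht. rewrite theta_antiperiodic, theta_odd by exact Ht.
  destruct (theta tau z). unfold Copp; cbn [fst snd]. apply pair_eq; ring.
Qed.

(* Clearing denominators: the relation for the three values of g is a consequence of the
   three-term identity t0 a0 b0 + t1 a1 b1 + t2 a2 b2 = 0. *)
Lemma three_fractions (a0 a1 a2 b0 b1 b2 t0 t1 t2 Y : C) :
  a0 <> RtoC 0 -> a1 <> RtoC 0 -> a2 <> RtoC 0 ->
  b0 <> RtoC 0 -> b1 <> RtoC 0 -> b2 <> RtoC 0 ->
  Cplus (Cplus (Cmult (Cmult t0 a0) b0) (Cmult (Cmult t1 a1) b1)) (Cmult (Cmult t2 a2) b2)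
    = RtoC 0 ->
  Cplus (Cplus (Cdiv (Cmult t0 Y) (Cmult (Cmult b1 a1) (Cmult a2 b2)))
               (Cdiv (Cmult t1 Y) (Cmult (Cmult b2 a2) (Cmult (Copp a0) (Copp b0)))))
        (Cdiv (Cmult t2 Y) (Cmult (Cmult (Copp b0) (Copp a0)) (Cmult (Copp a1) (Copp b1))))
  = RtoC 0.
Proof.
  intros Ha0 Ha1 Ha2 Hb0 Hb1 Hb2 Hsum.
  transitivity (Cmult (Cdiv Y (Cmult (Cmult (Cmult a0 a1) (Cmult a2 b0)) (Cmult b1 b2)))
    (Cplus (Cplus (Cmult (Cmult t0 a0) b0) (Cmult (Cmult t1 a1) b1)) (Cmult (Cmult t2 a2) b2))).
  - change (@eq C
      ((t0 * Y) / ((b1 * a1) * (a2 * b2)) + (t1 * Y) / ((b2 * a2) * (- a0 * - b0))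
       + (t2 * Y) / ((- b0 * - a0) * (- a1 * - b1)))
      ((Y / (((a0 * a1) * (a2 * b0)) * (b1 * b2))) * ((t0 * a0) * b0 + (t1 * a1) * b1
       + (t2 * a2) * b2)))%C.
    field. repeat split; assumption.
  - rewrite Hsum. C_ring.
Qed.

Lemma nonzero_factors (a b : C) : Cmult a b <> RtoC 0 -> a <> RtoC 0 /\ b <> RtoC 0.
Proof. intros H. split; intros E; apply H; rewrite E; C_ring. Qed.

Lemma nonzero_opp (a : C) : Copp a <> RtoC 0 -> a <> RtoC 0.
Proof. intros H E. apply H. rewrite E. unfold Copp, RtoC; cbn. apply pair_eq; ring. Qed.

Section ShiftInX.

Variables (tau x y : CC).
Hypothesis Htau : 0 < snd tau.

Let A (t : R) : C := theta tau (Cplus (Cplus x (RtoC t)) y).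
Let B (t : R) : C := theta tau (Cplus (Cplus x (RtoC t)) (Copp y)).
Let T (t : R) : C := theta tau (Cmult (RtoC 2) (Cplus x (RtoC t))).

(* The four theta factors of h at x, x + η, x + 2η are, up to sign, values of A and B. *)
Lemma h_at_x :
  h tau x y = Cmult (Cmult (B (PI / 3)) (A (PI / 3))) (Cmult (A (2 * (PI / 3))) (B (2 * (PI / 3)))).
Proof.
  unfold h, A, B. change Cmul with Cmult. f_equal; f_equal.
  - f_equal. C_affine.
  - f_equal. C_affine.
  - rewrite <- theta_reflect by exact Htau. f_equal. C_affine.
  - rewrite <- theta_reflect by exact Htau. f_equal. C_affine.
Qed.

Lemma h_at_x_eta : h tau (Cadd x eta) y
  = Cmult (Cmult (B (2 * (PI / 3))) (A (2 * (PI / 3)))) (Cmult (Copp (A 0)) (Copp (B 0))).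
Proof.
  unfold h, A, B. change Cmul with Cmult. f_equal; f_equal.
  - f_equal. C_affine.
  - f_equal. C_affine.
  - rewrite <- theta_odd by exact Htau. f_equal. C_affine.
  - rewrite <- theta_odd by exact Htau. f_equal. C_affine.
Qed.

Lemma h_at_x_2eta : h tau (Cadd x (Cscale 2 eta)) y
  = Cmult (Cmult (Copp (B 0)) (Copp (A 0))) (Cmult (Copp (A (PI / 3))) (Copp (B (PI / 3)))).
Proof.
  unfold h, A, B. change Cmul with Cmult. f_equal; f_equal.
  - rewrite <- theta_antiperiodic by exact Htau. f_equal. C_affine.
  - rewrite <- theta_antiperiodic by exact Htau. f_equal. C_affine.
  - rewrite <- theta_odd by exact Htau. f_equal. C_affine.
  - rewrite <- theta_odd by exact Htau. f_equal. C_affine.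
Qed.

Lemma g_relation_in_x :
  h tau x y <> C0 -> h tau (Cadd x eta) y <> C0 -> h tau (Cadd x (Cscale 2 eta)) y <> C0 ->
  Cadd (Cadd (g tau x y) (g tau (Cadd x eta) y)) (g tau (Cadd x (Cscale 2 eta)) y) = C0.
Proof.
  intros Hh0 Hh1 _. change C0 with (RtoC 0) in *.
  rewrite h_at_x in Hh0. rewrite h_at_x_eta in Hh1.
  apply nonzero_factors in Hh0 as [(Hb1 & Ha1)%nonzero_factors (Ha2 & Hb2)%nonzero_factors].
  apply nonzero_factors in Hh1 as [_ (Ha0%nonzero_opp & Hb0%nonzero_opp)%nonzero_factors].
  unfold g. rewrite h_at_x, h_at_x_eta, h_at_x_2eta.
  replace (theta tau (Cscale 2 x)) with (T 0) by (unfold T; f_equal; C_affine).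
  replace (theta tau (Cscale 2 (Cadd x eta))) with (T (PI / 3)) by (unfold T; f_equal; C_affine).
  replace (theta tau (Cscale 2 (Cadd x (Cscale 2 eta)))) with (T (2 * (PI / 3)))
    by (unfold T; f_equal; C_affine).
  apply three_fractions; try assumption.
  pose proof (three_term_identity tau x y Htau) as Hstar.
  unfold theta_product in Hstar. fold (A 0) (A (PI / 3)) (A (2 * (PI / 3))) in Hstar.
  fold (B 0) (B (PI / 3)) (B (2 * (PI / 3))) (T 0) (T (PI / 3)) (T (2 * (PI / 3))) in Hstar.
  exact Hstar.
Qed.

End ShiftInX.

Lemma h_sym tau x y : h tau x y = h tau y x.
Proof.
  unfold h.
  replace (Cadd eta (Cadd y (Cscale (-1) x))) with (Cadd eta (Cadd (Cscale (-1) x) y)) by C_affine.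
  replace (Cadd eta (Cadd y x)) with (Cadd eta (Cadd x y)) by C_affine.
  replace (Cadd eta (Cadd (Cscale (-1) y) (Cscale (-1) x)))
    with (Cadd eta (Cadd (Cscale (-1) x) (Cscale (-1) y))) by C_affine.
  replace (Cadd eta (Cadd (Cscale (-1) y) x)) with (Cadd eta (Cadd x (Cscale (-1) y))) by C_affine.
  C_ring.
Qed.

Lemma g_sym tau x y : g tau x y = g tau y x.
Proof. unfold g. rewrite h_sym. f_equal. C_ring. Qed.

Theorem mainTheorem5 (tau : CC) (Htau : 0 < Cim tau) :
  (forall x y : CC,
     h tau x y <> C0 ->
     h tau (Cadd x eta) y <> C0 ->
     h tau (Cadd x (Cscale 2 eta)) y <> C0 ->
     Cadd (Cadd (g tau x y) (g tau (Cadd x eta) y))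
          (g tau (Cadd x (Cscale 2 eta)) y) = C0) /\
  (forall x y : CC,
     h tau x y <> C0 ->
     h tau x (Cadd y eta) <> C0 ->
     h tau x (Cadd y (Cscale 2 eta)) <> C0 ->
     Cadd (Cadd (g tau x y) (g tau x (Cadd y eta)))
          (g tau x (Cadd y (Cscale 2 eta))) = C0).
Proof.
  split.
  - intros x y. exact (g_relation_in_x tau x y Htau).
  - intros x y. rewrite !(h_sym tau x), !(g_sym tau x). exact (g_relation_in_x tau y x Htau).
Qed.
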